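(* Let $R$ be a number ring and $I$ an ideal of $R$. For every integer $d\geq 2$ the following are equivalent: (1) the $R$-ideal $I$ can be generated by $d$ elements; (2) for every maximal ideal $\mathfrak p$ of $R$, the $R_{\mathfrak p}$-ideal $I_{\mathfrak p}$ can be generated by $d$ elements.
   Context: A number ring is a subring of a number field (a finite extension of $\mathbb{Q}$). $R_{\mathfrak p}$, $I_{\mathfrak p}$ denote localizations at $\mathfrak p$. *)

(* A number field is a finite-dimensional field extension
   L : fieldExtType rat; a number ring is a subring R of L, represented as a
   (Prop-valued) subset of L.  Ideals, localizations, etc. are subsets of L. *)
From HB Require Import structures.
From mathcomp Require Import all_boot all_order all_algebra all_field.
Set Implicit Arguments. Unset Strict Implicit. Unset Printing Implicit Defensive.
Import GRing.Theory.
Local Open Scope ring_scope.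

Section NumberRing.
Variable L : fieldExtType rat.

Definition is_subring (R : L -> Prop) : Prop :=
  R 1 /\ (forall x y, R x -> R y -> R (x - y)) /\
  (forall x y, R x -> R y -> R (x * y)).

Definition is_ideal (R I : L -> Prop) : Prop :=
  (forall x, I x -> R x) /\ I 0 /\
  (forall x y, I x -> I y -> I (x + y)) /\
  (forall r x, R r -> I x -> I (r * x)).

Definition is_maximal_ideal (R P : L -> Prop) : Prop :=
  is_ideal R P /\ (exists x, R x /\ ~ P x) /\
  forall J, is_ideal R J -> (forall x, P x -> J x) ->
    (forall x, J x -> P x) \/ (forall x, R x -> J x).

(* R_P, realized inside L (R is a domain, its fraction field embeds in L) *)
Definition localization (R P : L -> Prop) : L -> Prop :=
  fun x => exists r s, R r /\ R s /\ ~ P s /\ x = r / s.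

(* I_P = I R_P, realized inside L *)
Definition loc_ideal (R P I : L -> Prop) : L -> Prop :=
  fun x => exists i s, I i /\ R s /\ ~ P s /\ x = i / s.

Definition generated_by (A J : L -> Prop) (d : nat) : Prop :=
  exists g : 'I_d -> L, (forall j, J (g j)) /\
    forall x, J x <-> exists a : 'I_d -> L,
      (forall j, A (a j)) /\ x = \sum_(j < d) a j * g j.

End NumberRing.

(* Clearing denominators, [d] generators of [I_P] give [d] elements of [I]
   generating [I] modulo [P I], and conversely; so the task is to glue such local
   systems for all maximal ideals at once.  Pick [0 < N] in [I].  The ring [R / N R]
   is finite (modulo a prime [p], a family of [R] independent mod [p] has at most
   [[L : Q]] members), so only finitely many maximal ideals contain [N] and the
   Chinese remainder theorem applies to them.  A first generator [g1] is chosen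
   outside [P I] for each of them; an exchange argument puts it into every local
   system there, and the other coordinates are glued by CRT.  Some [N' > 0] lies in
   [g1 R], so the system generates at every [P] avoiding [N']; adding a multiple of
   [N^2] to the second generator (this is where [d >= 2] is used) makes it a unit at
   the finitely many [P] containing [N'] but not [N].  Finally, Nakayama's lemma
   shows that a system generating [I] modulo [P I] at every maximal [P] generates
   [I]. *)

From mathcomp Require Import all_boot all_order all_algebra all_field ring.
From mathcomp Require Import fingroup perm.
From Stdlib Require Import Classical ClassicalEpsilon FunctionalExtensionality PropExtensionality.
Set Implicit Arguments. Unset Strict Implicit. Unset Printing Implicit Defensive.
Import GRing.Theory Num.Theory.
Local Open Scope ring_scope.

Definition asbool (P : Prop) : bool :=
  if excluded_middle_informative P then true else false.

Lemma asboolP (P : Prop) : reflect P (asbool P).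
Proof. by rewrite /asbool; case: excluded_middle_informative => h; constructor. Qed.

Lemma pred_ext (T : Type) (A B : T -> Prop) :
  (forall x, A x -> B x) -> (forall x, B x -> A x) -> A = B.
Proof.
move=> AB BA; apply: functional_extensionality => x.
by apply: propositional_extensionality; split; [apply: AB | apply: BA].
Qed.

Lemma lift_max_widen n (i : 'I_n) : lift ord_max i = widen_ord (leqnSn n) i.
Proof. by apply: val_inj; exact: lift_max. Qed.

Section NumberRing.
Variable L : fieldExtType rat.

Lemma natf_neq0 n : (0 < n)%N -> (n%:R : L) != 0.
Proof.
move=> n_gt0; have -> : (n%:R : L) = in_alg L n%:R by rewrite rmorph_nat.
by rewrite fmorph_eq0 pnatr_eq0 -lt0n.
Qed.

Lemma exists_rat_relation k (x : 'I_k -> L) :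
  (\dim {:L} < k)%N -> exists c : 'I_k -> rat, (exists i, c i != 0) /\ \sum_i c i *: x i = 0.
Proof.
move=> dim_lt_k; set X := [tuple x i | i < k].
have /negP freeX : ~~ free X.
  apply/negP; rewrite /free size_tuple => /eqP dimX.
  by have := dimvS (subvf <<X>>%VS); rewrite dimX leqNgt dim_lt_k.
apply: NNPP => noc; apply/freeX/freeP => c Xc i; apply: NNPP => ci; apply: noc.
exists c; split; first by exists i; apply/eqP.
by rewrite -[RHS]Xc; apply: eq_bigr => j _; rewrite -tnth_nth tnth_map tnth_ord_tuple.
Qed.

Lemma exists_int_relation k (x : 'I_k -> L) :
  (\dim {:L} < k)%N -> exists z : 'I_k -> int, (exists i, z i != 0) /\ \sum_i (z i)%:~R * x i = 0.
Proof.
move=> /(exists_rat_relation x) [c [[i0 ci0] cx]].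
pose D := \prod_i denq (c i).
exists (fun i => numq (c i) * \prod_(j | j != i) denq (c j)); split.
  exists i0; rewrite mulf_neq0 ?numq_eq0 //.
  by apply/prodf_neq0 => j _; apply: denq_neq0.
have zE i : ((numq (c i) * \prod_(j | j != i) denq (c j))%:~R : rat) = D%:~R * c i.
  by rewrite (intrM _ (numq (c i))) numqE /D [in RHS](bigD1 i) //= (intrM _ (denq (c i))); ring.
under eq_bigr => i _ do rewrite mulrzl -scaler_int zE -scalerA.
by rewrite -scaler_sumr cx scaler0.
Qed.

(* The relation of least absolute size cannot have all its coefficients
   divisible by [p], otherwise dividing by [p] would give a smaller one. *)
Lemma exists_int_relation_indivisible p k (x : 'I_k -> L) : prime p ->
  (\dim {:L} < k)%N ->
  exists c : 'I_k -> int, \sum_i (c i)%:~R * x i = 0 /\ exists i, ~~ (p%:Z %| c i)%Z.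
Proof.
move=> p_pr dim_lt_k.
pose rel m := asbool (exists z : 'I_k -> int,
  [/\ exists i, z i != 0, \sum_i (z i)%:~R * x i = 0 & (\sum_i `|z i|)%N = m]).
have [|m /asboolP [z [[i0 zi0] zx <-]] zmin] := ex_minnP (P := rel).
  have [z [z_neq0 zx]] := exists_int_relation x dim_lt_k.
  by exists (\sum_i `|z i|)%N; apply/asboolP; exists z.
exists z; split=> //; apply: NNPP => /(_ _) z_indiv.
have pz i : (p%:Z %| z i)%Z by apply: NNPP => pzi; apply: z_indiv; exists i; apply/negP.
pose z' i := (z i %/ p%:Z)%Z.
have zE i : z i = z' i * p%:Z by rewrite /z' divzK.
have : rel (\sum_i `|z' i|)%N.
  apply/asboolP; exists z'; split=> //.
    by exists i0; move: zi0; rewrite zE; apply: contra => /eqP ->; rewrite mul0r.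
  have : (p%:R : L) * \sum_i (z' i)%:~R * x i = 0.
    rewrite -[RHS]zx mulr_sumr; apply: eq_bigr => i _.
    by rewrite zE intrM (_ : (p%:Z)%:~R = p%:R) //; ring.
  by move/eqP; rewrite mulf_eq0 (negbTE (natf_neq0 (prime_gt0 p_pr))) => /eqP.
move/zmin; apply/negP; rewrite -ltnNge.
have -> : (\sum_i `|z i|)%N = (p * \sum_i `|z' i|)%N.
  by rewrite big_distrr; apply: eq_bigr => i _; rewrite zE abszM mulnC.
rewrite ltn_Pmull ?prime_gt1 //.
rewrite (bigD1 i0) //= ltn_addr // absz_gt0.
by move: zi0; rewrite zE mulf_eq0 negb_or => /andP [].
Qed.

Variable R : L -> Prop.
Hypothesis subR : is_subring R.

Lemma Rpred1 : R 1. Proof. by case: subR. Qed.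
Lemma RpredB x y : R x -> R y -> R (x - y). Proof. by case: subR => _ [+ _]; apply. Qed.
Lemma RpredM x y : R x -> R y -> R (x * y). Proof. by case: subR => _ [_ +]; apply. Qed.
Lemma Rpred0 : R 0. Proof. by rewrite -(subrr 1); apply: RpredB; apply: Rpred1. Qed.
Lemma RpredN x : R x -> R (- x).
Proof. by move=> Rx; rewrite -sub0r; apply: RpredB Rpred0 Rx. Qed.
Lemma RpredD x y : R x -> R y -> R (x + y).
Proof. by move=> Rx Ry; rewrite -[y]opprK; apply: RpredB Rx (RpredN Ry). Qed.

Lemma Rpred_sum (I : Type) (r : seq I) (P : pred I) (F : I -> L) :
  (forall i, P i -> R (F i)) -> R (\sum_(i <- r | P i) F i).
Proof. by move=> RF; apply: (big_ind R Rpred0 RpredD) => i /RF. Qed.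

Lemma Rpred_prod (I : Type) (r : seq I) (P : pred I) (F : I -> L) :
  (forall i, P i -> R (F i)) -> R (\prod_(i <- r | P i) F i).
Proof. by move=> RF; apply: (big_ind R Rpred1 RpredM) => i /RF. Qed.

Lemma Rpred_nat n : R n%:R.
Proof.
by elim: n => [|n IHn]; [exact: Rpred0 | rewrite -addn1 natrD; apply: RpredD IHn Rpred1].
Qed.

Lemma Rpred_int (z : int) : R z%:~R.
Proof. by case: z => n; [exact: Rpred_nat | exact: RpredN (Rpred_nat n.+1)]. Qed.

Lemma RpredX x n : R x -> R (x ^+ n).
Proof. by move=> Rx; elim: n => [|n IHn]; [exact: Rpred1 | rewrite exprS; apply: RpredM]. Qed.

Section Ideal.
Variable I : L -> Prop.
Hypothesis idI : is_ideal R I.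

Lemma ideal_sub x : I x -> R x. Proof. by case: idI => + _; apply. Qed.
Lemma ideal0 : I 0. Proof. by case: idI => _ [+ _]. Qed.
Lemma idealD x y : I x -> I y -> I (x + y). Proof. by case: idI => _ [_ [+ _]]; apply. Qed.
Lemma idealMl r x : R r -> I x -> I (r * x). Proof. by case: idI => _ [_ [_ +]]; apply. Qed.
Lemma idealMr r x : R r -> I x -> I (x * r). Proof. by rewrite mulrC; apply: idealMl. Qed.
Lemma idealN x : I x -> I (- x).
Proof. by rewrite -mulN1r; apply: idealMl (RpredN Rpred1). Qed.
Lemma idealB x y : I x -> I y -> I (x - y).
Proof. by move=> Ix Iy; apply: idealD Ix (idealN Iy). Qed.

Lemma ideal_sum (J : Type) (r : seq J) (P : pred J) (F : J -> L) :
  (forall i, P i -> I (F i)) -> I (\sum_(i <- r | P i) F i).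
Proof. by move=> IF; apply: (big_ind I ideal0 idealD) => i /IF. Qed.

Lemma ideal1_full : I 1 -> forall x, R x -> I x.
Proof. by move=> I1 x Rx; rewrite -[x]mulr1; apply: idealMl. Qed.

End Ideal.

Lemma ideal_R : is_ideal R R.
Proof. by do 3?split => //; [exact: Rpred0 | exact: RpredD | exact: RpredM]. Qed.

Definition ideal_add (J K : L -> Prop) (x : L) : Prop :=
  exists j k, J j /\ K k /\ x = j + k.

Definition prod_ideal (P X : L -> Prop) (y : L) : Prop :=
  exists s : seq (L * L),
    (forall pr, pr \in s -> P pr.1 /\ X pr.2) /\ y = \sum_(pr <- s) pr.1 * pr.2.

Definition rspan k (g : 'I_k -> L) (x : L) : Prop :=
  exists a : 'I_k -> L, (forall j, R (a j)) /\ x = \sum_j a j * g j.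

Section IdealOperations.
Variables J K : L -> Prop.
Hypotheses (idJ : is_ideal R J) (idK : is_ideal R K).

Lemma ideal_add_ideal : is_ideal R (ideal_add J K).
Proof.
do 3?split.
- by move=> _ [j [k [Jj [Kk ->]]]]; apply: RpredD; [apply: ideal_sub Jj | apply: ideal_sub Kk].
- by exists 0, 0; rewrite addr0; do 2?split=> //; apply: ideal0.
- move=> _ _ [j [k [Jj [Kk ->]]]] [j' [k' [Jj' [Kk' ->]]]].
  exists (j + j'), (k + k'); do 2?split; [exact: idealD | exact: idealD | ring].
- move=> r _ Rr [j [k [Jj [Kk ->]]]].
  by exists (r * j), (r * k); rewrite mulrDr; do 2?split=> //; apply: idealMl.
Qed.

Lemma ideal_addl x : J x -> ideal_add J K x.
Proof. by exists x, 0; rewrite addr0; do 2?split=> //; apply: ideal0. Qed.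

Lemma ideal_addr x : K x -> ideal_add J K x.
Proof. by exists 0, x; rewrite add0r; do 2?split=> //; apply: ideal0. Qed.

Lemma ideal_add_min (M : L -> Prop) x : is_ideal R M ->
  (forall y, J y -> M y) -> (forall y, K y -> M y) -> ideal_add J K x -> M x.
Proof. by move=> idM JM KM [j [k [/JM Mj [/KM Mk ->]]]]; apply: idealD. Qed.

Lemma prod_ideal_ideal : is_ideal R (prod_ideal J K).
Proof.
do 3?split.
- move=> _ [s [sJK ->]]; rewrite big_seq; apply: Rpred_sum => pr /sJK [Jp Kp].
  by apply: RpredM; [apply: ideal_sub Jp | apply: ideal_sub Kp].
- by exists [::]; rewrite big_nil.
- move=> _ _ [s [sJK ->]] [t [tJK ->]]; exists (s ++ t); rewrite big_cat.
  by split=> // pr; rewrite mem_cat => /orP [/sJK | /tJK].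
- move=> r _ Rr [s [sJK ->]]; exists [seq (r * pr.1, pr.2) | pr <- s]; split.
    by move=> _ /mapP [pr /sJK [Jp Kp] ->]; split=> //; apply: idealMl.
  by rewrite big_map mulr_sumr; apply: eq_bigr => pr _; rewrite mulrA.
Qed.

Lemma prod_ideal_mul p x : J p -> K x -> prod_ideal J K (p * x).
Proof.
by move=> Jp Kx; exists [:: (p, x)]; rewrite big_seq1; split=> // pr; rewrite inE => /eqP ->.
Qed.

Lemma prod_ideal_subl y : prod_ideal J K y -> J y.
Proof.
move=> [s [sJK ->]]; rewrite big_seq; apply: (ideal_sum idJ) => pr /sJK [Jp Kp].
by apply: (idealMr idJ) => //; apply: ideal_sub Kp.
Qed.

End IdealOperations.

Lemma rspan_ideal k (g : 'I_k -> L) : (forall j, R (g j)) -> is_ideal R (rspan g).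
Proof.
move=> Rg; do 3?split.
- by move=> _ [a [Ra ->]]; apply: Rpred_sum => i _; apply: RpredM.
- exists (fun _ => 0); split=> [j|]; first exact: Rpred0.
  by rewrite big1 // => i _; rewrite mul0r.
- move=> _ _ [a [Ra ->]] [b [Rb ->]]; exists (fun j => a j + b j); split.
    by move=> j; apply: RpredD.
  by rewrite -big_split; apply: eq_bigr => i _; rewrite mulrDl.
- move=> r _ Rr [a [Ra ->]]; exists (fun j => r * a j); split.
    by move=> j; apply: RpredM.
  by rewrite mulr_sumr; apply: eq_bigr => i _; rewrite mulrA.
Qed.

Lemma sum_delta k (j : 'I_k) (F : 'I_k -> L) : \sum_i (i == j)%:R * F i = F j.
Proof.
by rewrite (bigD1 j) //= eqxx mul1r big1 ?addr0 // => i /negbTE ->; rewrite mul0r.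
Qed.

Lemma rspan_gen k (g : 'I_k -> L) j : rspan g (g j).
Proof.
by exists (fun i => (i == j)%:R); rewrite sum_delta; split=> // i; apply: Rpred_nat.
Qed.

Lemma rspan_min k (g : 'I_k -> L) (M : L -> Prop) x :
  is_ideal R M -> (forall j, M (g j)) -> rspan g x -> M x.
Proof. by move=> idM Mg [a [Ra ->]]; apply: (ideal_sum idM) => j _; apply: idealMl. Qed.

Section Maximal.
Variable P : L -> Prop.
Hypothesis maxP : is_maximal_ideal R P.

Lemma maximal_ideal : is_ideal R P. Proof. by case: maxP. Qed.

Lemma maximal_not1 : ~ P 1.
Proof.
case: maxP => idP [[x [Rx Px]] _] P1; apply: Px.
by apply: ideal1_full.
Qed.

Lemma maximal_neq0 s : ~ P s -> s != 0.
Proof. by apply: contra_notN => /eqP ->; apply: ideal0 maximal_ideal. Qed.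

(* [P + rR] is an ideal strictly larger than [P], hence all of [R]. *)
Lemma maximal_inv r : R r -> ~ P r -> exists2 u, R u & P (u * r - 1).
Proof.
move=> Rr Pr; have idP := maximal_ideal.
pose J x := exists p y, P p /\ R y /\ x = p + y * r.
have idJ : is_ideal R J.
  do 3?split.
  - move=> _ [p [y [Pp [Ry ->]]]].
    by apply: RpredD; [apply: ideal_sub Pp | apply: RpredM].
  - exists 0, 0; rewrite mul0r addr0.
    by do 2?split=> //; [apply: ideal0 | apply: Rpred0].
  - move=> _ _ [p [y [Pp [Ry ->]]]] [p' [y' [Pp' [Ry' ->]]]].
    exists (p + p'), (y + y'); do 2?split; [exact: idealD | exact: RpredD | ring].
  - move=> s _ Rs [p [y [Pp [Ry ->]]]]; exists (s * p), (s * y).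
    do 2?split; [exact: idealMl | exact: RpredM | ring].
have PJ x : P x -> J x by exists x, 0; rewrite mul0r addr0; do 2?split=> //; apply: Rpred0.
case: maxP => _ [_ /(_ J idJ PJ)] [JP | JR].
  case: Pr; apply: JP; exists 0, 1; rewrite add0r mul1r.
  by do 2?split=> //; [apply: ideal0 | apply: Rpred1].
have [p [y [Pp [Ry e1]]]] := JR 1 Rpred1.
exists y => //; have -> : y * r - 1 = - p by rewrite e1; ring.
exact: idealN.
Qed.

Lemma maximal_mul_notin a b : R a -> R b -> ~ P a -> ~ P b -> ~ P (a * b).
Proof.
move=> Ra Rb Pa Pb Pab; have idP := maximal_ideal.
have [u Ru Pua] := maximal_inv Ra Pa; apply: Pb.
have -> : b = u * (a * b) - (u * a - 1) * b by ring.
by apply: (idealB idP); [apply: (idealMl idP) | apply: (idealMr idP)].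
Qed.

Lemma maximal_prod_notin (J : Type) (r : seq J) (Q : pred J) (F : J -> L) :
  (forall i, Q i -> R (F i) /\ ~ P (F i)) ->
  R (\prod_(i <- r | Q i) F i) /\ ~ P (\prod_(i <- r | Q i) F i).
Proof.
move=> RF; apply: (big_ind (fun x => R x /\ ~ P x)) => //.
- by split; [exact: Rpred1 | exact: maximal_not1].
- by move=> x y [Rx Px] [Ry Py]; split; [apply: RpredM | apply: maximal_mul_notin].
Qed.

End Maximal.

Definition generates_mod (P I : L -> Prop) k (g : 'I_k -> L) : Prop :=
  forall x, I x -> ideal_add (rspan g) (prod_ideal P I) x.

Section GenerationModulo.
Variables P I : L -> Prop.
Hypotheses (idP : is_ideal R P) (idI : is_ideal R I).
Let idPI := prod_ideal_ideal idP idI.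

Lemma generates_mod_trans k (g : 'I_k -> L) k' (g' : 'I_k' -> L) :
  (forall j, I (g' j)) -> generates_mod P I g ->
  (forall j, ideal_add (rspan g') (prod_ideal P I) (g j)) -> generates_mod P I g'.
Proof.
move=> Ig' gen gg' x /gen.
have idg' := rspan_ideal (fun j => ideal_sub idI (Ig' j)).
have idM := ideal_add_ideal idg' idPI.
apply: (ideal_add_min idM) => y; first exact: rspan_min.
by move/(ideal_addr idg').
Qed.

Lemma generates_mod_congr k (g h : 'I_k -> L) :
  (forall j, I (g j)) -> (forall j, prod_ideal P I (g j - h j)) ->
  generates_mod P I h -> generates_mod P I g.
Proof.
move=> Ig gh genh; apply: generates_mod_trans genh _ => // j.
exists (g j), (- (g j - h j)); split; first exact: rspan_gen.
by split; [apply: (idealN idPI) | ring].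
Qed.

Hypothesis maxP : is_maximal_ideal R P.

Lemma generates_mod_unit k (g : 'I_k -> L) z :
  (forall j, I (g j)) -> rspan g z -> ~ P z -> generates_mod P I g.
Proof.
move=> Ig gz Pz x Ix; have idg := rspan_ideal (fun j => ideal_sub idI (Ig j)).
have [u Ru Puz] := maximal_inv maxP (ideal_sub idg gz) Pz.
exists (u * x * z), (- ((u * z - 1) * x)); split.
  by apply: (idealMl idg) => //; apply: RpredM Ru (ideal_sub idI Ix).
by split; [apply: (idealN idPI); apply: prod_ideal_mul | ring].
Qed.

(* Some coefficient of [y] on [h] is a unit mod [P]; swap that generator into
   slot [i0] and replace it there by [y]. *)
Lemma generates_mod_exchange k (h : 'I_k -> L) y i0 :
  (forall j, I (h j)) -> generates_mod P I h -> I y -> ~ prod_ideal P I y ->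
  exists h' : 'I_k -> L, [/\ h' i0 = y, forall j, I (h' j) & generates_mod P I h'].
Proof.
move=> Ih genh Iy PIy.
have [_ [p [[c [Rc ->]] [PIp ey]]]] := genh y Iy.
have [j Pcj] : exists j, ~ P (c j).
  apply: NNPP => Pc; apply: PIy; rewrite ey; apply: (idealD idPI _ PIp).
  apply: (ideal_sum idPI) => i _; apply: prod_ideal_mul (Ih i).
  by apply: NNPP => Pci; apply: Pc; exists i.
have [u Ru Pucj] := maximal_inv maxP (Rc j) Pcj.
pose h' i := if i == i0 then y else h (tperm i0 j i).
have Ih' i : I (h' i) by rewrite /h'; case: eqP => _.
exists h'; split=> //; first by rewrite /h' eqxx.
pose M := ideal_add (rspan h') (prod_ideal P I).
have idh' := rspan_ideal (fun i => ideal_sub idI (Ih' i)).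
have idM : is_ideal R M := ideal_add_ideal idh' idPI.
have Mh i : i != j -> M (h i).
  move=> ij; apply: (ideal_addl idPI).
  have -> : h i = h' (tperm i0 j i).
    by rewrite /h' -(inj_eq (@perm_inj _ (tperm i0 j))) tpermK tpermL (negbTE ij).
  exact: rspan_gen.
apply: generates_mod_trans genh _ => // i.
have [{i}-> | /Mh //] := eqVneq i j.
have My : M y.
  by apply: (ideal_addl idPI); rewrite (_ : y = h' i0); [apply: rspan_gen | rewrite /h' eqxx].
have -> : h j = u * y - u * \sum_(i | i != j) c i * h i - u * p - (u * c j - 1) * h j.
  by rewrite ey (bigD1 j) //=; ring.
apply: (idealB idM); last by apply: (ideal_addr idh'); apply: prod_ideal_mul.
apply: (idealB idM); last by apply: (ideal_addr idh'); apply: (idealMl idPI).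
apply: (idealB idM); first exact: idealMl.
by apply: (idealMl idM) => //; apply: (ideal_sum idM) => i ij; apply: (idealMl idM) (Mh i ij).
Qed.

End GenerationModulo.

Lemma prod_ideal_coef (P I : L -> Prop) k (f : 'I_k -> L) y :
  is_ideal R P -> is_ideal R I -> (forall x, I x -> rspan f x) ->
  prod_ideal P I y -> exists2 c : 'I_k -> L, forall l, P (c l) & y = \sum_l c l * f l.
Proof.
move=> idP idI If [s []]; elim: s y => [|[p x] s IHs] y sPI ->.
  exists (fun _ => 0) => [l|]; first exact: ideal0.
  by rewrite big_nil big1 // => l _; rewrite mul0r.
rewrite big_cons /=; have [|c Pc ->] := IHs _ _ erefl.
  by move=> pr spr; apply: sPI; rewrite inE spr orbT.
have [/= Pp /If [a [Ra ->]]] := sPI (p, x) (mem_head _ _).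
exists (fun l => p * a l + c l) => [l|]; first by apply: idealD => //; apply: idealMr.
by rewrite mulr_sumr -big_split /=; apply: eq_bigr => l _; ring.
Qed.

Section Nakayama.
Variable P : L -> Prop.
Hypothesis maxP : is_maximal_ideal R P.

Definition relations_mod (J : L -> Prop) s k (f : 'I_k -> L) : Prop :=
  forall i, exists2 c : 'I_k -> L, forall l, P (c l) & J (s * f i - \sum_l c l * f l).

(* Solve the last relation for [f ord_max], whose coefficient [s - c_k] is still
   a unit mod [P], and substitute it into the other relations. *)
Lemma relations_mod_drop_last (J : L -> Prop) k (f : 'I_k.+1 -> L) s :
  is_ideal R J -> R s -> ~ P s -> relations_mod J s f ->
  let w := widen_ord (leqnSn k) in
  exists s1 (c : 'I_k -> L), [/\ R s1, ~ P s1, forall l, P (c l),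
    J (s1 * f ord_max - \sum_l c l * f (w l)) &
    relations_mod J (s1 * s) (fun i => f (w i))].
Proof.
move=> idJ Rs Ps rel w; have idP := maximal_ideal maxP.
have [ck Pck Jk] := rel ord_max; rewrite big_ord_recr /= in Jk.
set Sk := \sum_(l < k) ck (w l) * f (w l) in Jk.
pose s1 := s - ck ord_max.
have Rs1 : R s1 := RpredB Rs (ideal_sub idP (Pck _)).
exists s1, (fun l => ck (w l)); split=> //.
- by move=> Ps1; apply: Ps; rewrite -(subrK (ck ord_max) s); apply: (idealD idP Ps1).
- rewrite /= [X in J X](_ : _ = s * f ord_max - (Sk + ck ord_max * f ord_max)) //.
  by rewrite /s1 /Sk; ring.
move=> i; have [ci Pci Ji] := rel (w i); rewrite big_ord_recr /= in Ji.
set Si := \sum_(l < k) ci (w l) * f (w l) in Ji.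
exists (fun l => s1 * ci (w l) + ci ord_max * ck (w l)).
  move=> l; apply: (idealD idP); first exact: idealMl.
  exact: idealMr (ideal_sub idP (Pck _)) (Pci _).
have -> : \sum_l (s1 * ci (w l) + ci ord_max * ck (w l)) * f (w l) =
          s1 * Si + ci ord_max * Sk.
  by rewrite !mulr_sumr -big_split /=; apply: eq_bigr => l _; ring.
have -> : s1 * s * f (w i) - (s1 * Si + ci ord_max * Sk) =
    s1 * (s * f (w i) - (Si + ci ord_max * f ord_max)) +
    ci ord_max * (s * f ord_max - (Sk + ck ord_max * f ord_max)).
  by rewrite /s1; ring.
apply: (idealD idJ); first exact: idealMl Rs1 Ji.
exact: idealMl (ideal_sub idP (Pci _)) Jk.
Qed.

Lemma determinant_trick (J : L -> Prop) k (f : 'I_k -> L) s :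
  is_ideal R J -> (forall i, R (f i)) -> R s -> ~ P s -> relations_mod J s f ->
  exists t, [/\ R t, ~ P t & forall i, J (t * f i)].
Proof.
move=> idJ; have idP := maximal_ideal maxP.
elim: k f s => [|k IHk] f s Rf Rs Ps rel.
  by exists 1; split=> [||[]]; [exact: Rpred1 | exact: maximal_not1 | ].
have [s1 [c [Rs1 Ps1 Pc Jlast rel']]] := relations_mod_drop_last idJ Rs Ps rel.
have [t [Rt Pt Jt]] := IHk _ _ (fun i => Rf _) (RpredM Rs1 Rs)
  (maximal_mul_notin maxP Rs1 Rs Ps1 Ps) rel'.
exists (t * s1); split; [exact: RpredM | exact: maximal_mul_notin | move=> i].
have [i' -> | ->] := unliftP ord_max i.
  by rewrite lift_max_widen mulrAC; apply: (idealMr idJ).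
set w := widen_ord (leqnSn k) in Jlast Jt *.
have sumE : \sum_l c l * (t * f (w l)) = t * \sum_l c l * f (w l).
  by rewrite mulr_sumr; apply: eq_bigr => l _; ring.
have -> : t * s1 * f ord_max =
    t * (s1 * f ord_max - \sum_l c l * f (w l)) + \sum_l c l * (t * f (w l)).
  by rewrite sumE; ring.
apply: (idealD idJ); first exact: idealMl.
apply: (ideal_sum idJ) => l _.
exact: idealMl (ideal_sub idP (Pc _)) (Jt l).
Qed.

Lemma nakayama (I J : L -> Prop) k (f : 'I_k -> L) :
  is_ideal R I -> is_ideal R J -> (forall i, I (f i)) -> (forall x, I x -> rspan f x) ->
  (forall x, I x -> ideal_add J (prod_ideal P I) x) ->
  exists t, [/\ R t, ~ P t & forall x, I x -> J (t * x)].
Proof.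
move=> idI idJ If Ispan IJ.
have [|t [Rt Pt Jt]] := determinant_trick idJ (fun i => ideal_sub idI (If i)) Rpred1
  (maximal_not1 maxP).
  move=> i; have [j [p [Jj [PIp ->]]]] := IJ _ (If i).
  have [c Pc ep] := prod_ideal_coef (maximal_ideal maxP) idI Ispan PIp.
  by exists c => //; rewrite mul1r -ep addrK.
exists t; split=> // _ /Ispan [a [Ra ->]].
rewrite mulr_sumr; apply: (ideal_sum idJ) => i _.
by rewrite mulrCA; apply: idealMl.
Qed.

End Nakayama.

Definition dvdR (a y : L) : Prop := exists2 r, R r & y = a * r.

Lemma dvdR_ideal a : R a -> is_ideal R (dvdR a).
Proof.
move=> Ra; do 3?split.
- by move=> _ [r Rr ->]; apply: RpredM.
- by exists 0; [exact: Rpred0 | rewrite mulr0].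
- by move=> _ _ [r Rr ->] [r' Rr' ->]; exists (r + r'); [apply: RpredD | rewrite mulrDr].
- by move=> s _ Rs [r Rr ->]; exists (s * r); [apply: RpredM | rewrite mulrCA].
Qed.

(* An integer relation of least degree among the powers of [b] has a nonzero
   constant term, which then lies in [b R]. *)
Lemma exists_nat_multiple b : R b -> b != 0 -> exists2 N, (0 < N)%N & dvdR b N%:R.
Proof.
move=> Rb b_neq0.
pose rel m := asbool (exists z : 'I_m -> int,
  (exists i, z i != 0) /\ \sum_i (z i)%:~R * b ^+ i = 0).
have [|[|m] /asboolP [z [[i0 zi0] zb]] zmin] := ex_minnP (P := rel).
- exists (\dim {:L}).+1; apply/asboolP.
  exact: (exists_int_relation (fun i : 'I_(\dim {:L}).+1 => b ^+ i) (ltnSn _)).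
- by case: i0 zi0.
pose S := \sum_(i < m) (z (lift ord0 i))%:~R * b ^+ i.
have zbE : (z ord0)%:~R + b * S = 0.
  rewrite -[RHS]zb big_ord_recl expr0 mulr1 mulr_sumr; congr (_ + _).
  by apply: eq_bigr => i _; rewrite lift0 exprS; ring.
have z0_neq0 : z ord0 != 0.
  apply/negP => /eqP z0; rewrite z0 add0r in zbE.
  have /zmin : rel m.
    apply/asboolP; exists (fun i => z (lift ord0 i)); split.
      by case: (unliftP ord0 i0) zi0 => [j -> | ->]; [exists j | rewrite z0 eqxx].
    by move/eqP: zbE; rewrite mulf_eq0 (negbTE b_neq0) => /eqP.
  by rewrite ltnn.
have RS : R S.
  by apply: Rpred_sum => i _; apply: RpredM; [exact: Rpred_int | exact: RpredX].
exists `|z ord0|%N; first by rewrite absz_gt0.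
have -> : (`|z ord0|%N%:R : L) = (Num.sg (z ord0))%:~R * (z ord0)%:~R.
  by rewrite -intrM -normrEsg -abszE.
exists (- ((Num.sg (z ord0))%:~R * S)); first by apply: RpredN; apply: RpredM (Rpred_int _) RS.
by rewrite -[(z ord0)%:~R](addrK (b * S)) zbE; ring.
Qed.

Definition residue_system (N : nat) (s : seq L) : Prop :=
  (forall t, t \in s -> R t) /\ forall y, R y -> exists2 t, t \in s & dvdR N%:R (y - t).

Lemma dvdR_reduce_coef N k (x : 'I_k -> L) (b : 'I_k -> int) : (0 < N)%N ->
  (forall i, R (x i)) ->
  exists f : {ffun 'I_k -> 'I_N},
    dvdR N%:R (\sum_i (b i)%:~R * x i - \sum_i (f i : nat)%:R * x i).
Proof.
case: N => [//|N] _ Rx; have NE : ((N.+1%:Z)%:~R : L) = N.+1%:R by [].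
pose m i := (b i %% N.+1%:Z)%Z.
have m_ge0 i : 0 <= m i by rewrite modz_ge0.
have m_lt i : (`|m i| < N.+1)%N.
  by rewrite -ltz_nat gez0_abs // ltz_pmod // ltz_nat.
exists [ffun i => inord `|m i|].
exists (\sum_i ((b i %/ N.+1%:Z)%Z)%:~R * x i).
  by apply: Rpred_sum => i _; apply: RpredM (Rpred_int _) (Rx i).
rewrite mulr_sumr -sumrB; apply: eq_bigr => i _.
rewrite ffunE inordK // (_ : `|m i|%:R = (m i)%:~R); last first.
  by rewrite -[in RHS](gez0_abs (m_ge0 i)).
by rewrite {1}(divz_eq (b i) N.+1%:Z) intrD intrM NE; ring.
Qed.

Definition rcons_fun k (x : 'I_k -> L) (y : L) (i : 'I_k.+1) : L :=
  if unlift ord_max i is Some j then x j else y.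

Lemma big_rcons_fun k (x : 'I_k -> L) y (F : 'I_k.+1 -> L -> L) :
  \sum_i F i (rcons_fun x y i) =
  \sum_(i < k) F (widen_ord (leqnSn k) i) (x i) + F ord_max y.
Proof.
rewrite big_ord_recr /rcons_fun unlift_none; congr (_ + _); apply: eq_bigr => i _.
by rewrite -lift_max_widen liftK.
Qed.

Definition indep_mod (p : nat) k (x : 'I_k -> L) : Prop :=
  (forall i, R (x i)) /\
  forall c : 'I_k -> int, dvdR p%:R (\sum_i (c i)%:~R * x i) -> forall i, (p%:Z %| c i)%Z.

Lemma indep_mod_le_dim p k (x : 'I_k -> L) : prime p -> indep_mod p x -> (k <= \dim {:L})%N.
Proof.
move=> p_pr [_ xindep]; rewrite leqNgt; apply/negP => /(exists_int_relation_indivisible x p_pr).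
move=> [c [cx [i /negP]]]; apply; apply: xindep.
by rewrite cx; apply: ideal0 (dvdR_ideal (Rpred_nat p)).
Qed.

(* Modulo a prime, a non-trivial relation involving [y] has a unit coefficient
   on [y], which can be inverted by Bezout. *)
Lemma indep_mod_rcons p k (x : 'I_k -> L) y : prime p -> indep_mod p x -> R y ->
  ~ indep_mod p (rcons_fun x y) ->
  exists b : 'I_k -> int, dvdR p%:R (y - \sum_i (b i)%:~R * x i).
Proof.
move=> p_pr [Rx xindep] Ry xyindep; have idp := dvdR_ideal (Rpred_nat p).
have pE : ((p%:Z)%:~R : L) = p%:R by [].
have [c [pc [i pci]]] : exists c : 'I_k.+1 -> int,
    dvdR p%:R (\sum_i (c i)%:~R * rcons_fun x y i) /\ exists i, ~ (p%:Z %| c i)%Z.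
  apply: NNPP => nc; apply: xyindep; split.
    by move=> i; rewrite /rcons_fun; case: unliftP.
  by move=> c pc i; apply: NNPP => pci; apply: nc; exists c; split=> //; exists i.
rewrite (big_rcons_fun x y (fun i v => (c i)%:~R * v)) in pc.
set S := \sum_(i < k) _ in pc; pose cy := c ord_max.
have pcy : ~~ (p%:Z %| cy)%Z.
  apply/negP => /dvdzP [e cyE]; apply: pci.
  have pS : dvdR p%:R S.
    have -> : S = S + cy%:~R * y - p%:R * (e%:~R * y) by rewrite cyE intrM pE; ring.
    by apply: (idealB idp) pc _; exists (e%:~R * y) => //; apply: RpredM (Rpred_int _) Ry.
  have [i' -> | ->] := unliftP ord_max i; last by rewrite -/cy cyE dvdz_mull.
  by rewrite lift_max_widen; apply: (xindep _ pS).
have /coprimezP [[u v] /= uv] : coprimez p cy.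
  by rewrite coprimezE /= prime_coprime // -dvdzE.
exists (fun i => (- v * c (widen_ord (leqnSn k) i))%R).
have -> : y - \sum_i ((- v * c (widen_ord (leqnSn k) i))%R)%:~R * x i =
    (1 - (u * p%:Z + v * cy)%:~R) * y + v%:~R * (S + cy%:~R * y) + p%:R * (u%:~R * y).
  have -> : \sum_i ((- v * c (widen_ord (leqnSn k) i))%R)%:~R * x i = - (v%:~R * S).
    by rewrite /S mulr_sumr -sumrN; apply: eq_bigr => l _; rewrite intrM intrN; ring.
  by rewrite intrD !intrM pE; ring.
rewrite uv subrr mul0r add0r; apply: (idealD idp); first exact: (idealMl idp (Rpred_int v) pc).
by exists (u%:~R * y) => //; apply: RpredM (Rpred_int _) Ry.
Qed.

(* A family of maximal size (at most [\dim {:L}]) among those independent mod [p]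
   spans [R] modulo [p]. *)
Lemma residue_system_prime p : prime p -> exists s, residue_system p s.
Proof.
move=> p_pr.
pose indep k := asbool (exists x : 'I_k -> L, indep_mod p x).
have [||k /asboolP [x xindep] kmax] := ex_maxnP (P := indep) (m := \dim {:L}).
- exists 0%N; apply/asboolP; exists (fun _ => 0); split=> [i|c _ []//].
  exact: Rpred0.
- by move=> k /asboolP [x /(indep_mod_le_dim p_pr)].
have Rx := xindep.1.
exists [seq \sum_i (f i : nat)%:R * x i | f : {ffun 'I_k -> 'I_p} <- enum {ffun 'I_k -> 'I_p}].
split=> [_ /mapP [f _ ->] | y Ry].
  by apply: Rpred_sum => i _; apply: RpredM (Rpred_nat _) (Rx i).
have [|b pb] := indep_mod_rcons p_pr xindep Ry.
  move=> xyindep; suff : (k.+1 <= k)%N by rewrite ltnn.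
  by apply: kmax; apply/asboolP; exists (rcons_fun x y).
have [f pf] := dvdR_reduce_coef b (prime_gt0 p_pr) Rx.
exists (\sum_i (f i : nat)%:R * x i); first by apply: map_f; rewrite mem_enum.
have -> : y - \sum_i (f i : nat)%:R * x i =
    (y - \sum_i (b i)%:~R * x i) + (\sum_i (b i)%:~R * x i - \sum_i (f i : nat)%:R * x i).
  by rewrite addrA subrK.
exact: (idealD (dvdR_ideal (Rpred_nat p))).
Qed.

Lemma residue_systemM m n sm sn : residue_system m sm -> residue_system n sn ->
  residue_system (n * m) [seq t + m%:R * t' | t <- sm, t' <- sn].
Proof.
move=> [Rsm msm] [Rsn nsn]; split.
  move=> _ /allpairsP [[t t'] [/= smt snt' ->]].
  by apply: RpredD (Rsm _ smt) (RpredM (Rpred_nat _) (Rsn _ snt')).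
move=> y Ry; have [t smt [r Rr yt]] := msm y Ry; have [t' snt' [r' Rr' rt']] := nsn r Rr.
exists (t + m%:R * t'); first exact: (allpairs_f (fun a b => a + m%:R * b) smt snt').
exists r' => //; rewrite natrM.
have -> : y - (t + m%:R * t') = m%:R * (r - t') by rewrite mulrBr -yt; ring.
by rewrite rt'; ring.
Qed.

Lemma residue_system_exists N : (0 < N)%N -> exists s, residue_system N s.
Proof.
elim/ltn_ind: N => N IHN N_gt0; have [N_le1 | N_gt1] := leqP N 1.
  have -> : N = 1%N by apply/eqP; rewrite eqn_leq N_le1 N_gt0.
  exists [:: 0]; split=> [t | y Ry]; first by rewrite inE => /eqP ->; exact: Rpred0.
  by exists 0; rewrite ?inE //; exists y; rewrite ?subr0 ?mul1r.
have p_pr := pdiv_prime N_gt1; set p := pdiv N in p_pr.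
have NE : N = (N %/ p * p)%N by rewrite divnK // pdiv_dvd.
have [sp psp] := residue_system_prime p_pr.
have Np_lt : (N %/ p < N)%N by rewrite ltn_Pdiv // prime_gt1.
have Np_gt0 : (0 < N %/ p)%N by rewrite divn_gt0 ?prime_gt0 // dvdn_leq // pdiv_dvd.
have [sM MsM] := IHN _ Np_lt Np_gt0.
by rewrite NE; eexists; apply: residue_systemM psp MsM.
Qed.

Lemma ideal_dvdR_congr (K : L -> Prop) a x y :
  is_ideal R K -> K a -> dvdR a (x - y) -> K x -> K y.
Proof.
move=> idK Ka [r Rr xy] Kx; have -> : y = x - a * r by rewrite -xy; ring.
by apply: (idealB idK Kx); apply: idealMr.
Qed.

Definition residue_code (s : seq L) (K : L -> Prop) : {set 'I_(size s)} :=
  [set i : 'I_(size s) | asbool (K (nth 0 s i))].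

Lemma residue_code_mono s (K K' : L -> Prop) :
  (forall x, K x -> K' x) -> residue_code s K \subset residue_code s K'.
Proof. by move=> KK'; apply/subsetP => i; rewrite !inE => /asboolP /KK' /asboolP. Qed.

Section ResidueCode.
Variables (N : nat) (s : seq L).
Hypothesis Ns : residue_system N s.

Lemma residue_code_sub (K K' : L -> Prop) : is_ideal R K -> is_ideal R K' ->
  K N%:R -> K' N%:R -> residue_code s K \subset residue_code s K' ->
  forall x, K x -> K' x.
Proof.
move=> idK idK' KN K'N /subsetP sKK' x Kx.
have [t st xt] := Ns.2 x (ideal_sub idK Kx).
have st' : (index t s < size s)%N by rewrite index_mem.
have /sKK' : Ordinal st' \in residue_code s K.
  by rewrite inE /= nth_index //; apply/asboolP; apply: ideal_dvdR_congr xt Kx.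
rewrite inE /= nth_index // => /asboolP K't.
have tx : dvdR N%:R (t - x) by rewrite -opprB; apply: (idealN (dvdR_ideal (Rpred_nat N))).
exact: ideal_dvdR_congr K'N tx K't.
Qed.

Lemma maximal_eq_of_code (P Q : L -> Prop) :
  is_maximal_ideal R P -> is_maximal_ideal R Q -> P N%:R -> Q N%:R ->
  residue_code s P = residue_code s Q -> P = Q.
Proof.
move=> maxP maxQ PN QN codePQ; have idP := maximal_ideal maxP; have idQ := maximal_ideal maxQ.
by apply: pred_ext; apply: residue_code_sub; rewrite ?codePQ.
Qed.

End ResidueCode.

(* A proper ideal containing the maximal number of residues mod [N] is maximal. *)
Lemma exists_maximal_ideal (C : L -> Prop) N : is_ideal R C -> (0 < N)%N -> C N%:R -> ~ C 1 ->
  exists2 P, is_maximal_ideal R P & forall x, C x -> P x.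
Proof.
move=> idC N_gt0 CN C1; have [s Ns] := residue_system_exists N_gt0.
pose proper K := [/\ is_ideal R K, forall x, C x -> K x & ~ K 1].
pose ncode m := asbool (exists2 K, proper K & #|residue_code s K| = m).
have [||m /asboolP [K [idK CK K1] <-] Kmax] := ex_maxnP (P := ncode) (m := size s).
- by exists #|residue_code s C|; apply/asboolP; exists C.
- by move=> m /asboolP [K _ <-]; apply: leq_trans (max_card _) _; rewrite card_ord.
exists K => //; split=> //; split; first by exists 1; split=> //; exact: Rpred1.
move=> J idJ KJ; have [J1 | J1] := classic (J 1); first by right; apply: ideal1_full.
left; have KN := CK _ CN.
apply: (residue_code_sub Ns idJ idK (KJ _ KN) KN); apply: NNPP => codeJK.
have /proper_card : residue_code s K \proper residue_code s J.
  by rewrite properE residue_code_mono //; apply/negP.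
rewrite ltnNge Kmax //; apply/asboolP; exists J => //.
by split=> // x /CK /KJ.
Qed.

(* [I] is generated by [N] and the residues mod [N] it contains. *)
Lemma ideal_fg (I : L -> Prop) N : is_ideal R I -> (0 < N)%N -> I N%:R ->
  exists k (f : 'I_k -> L), (forall i, I (f i)) /\ forall x, I x -> rspan f x.
Proof.
move=> idI N_gt0 IN; have [s [Rs Ns]] := residue_system_exists N_gt0.
pose gens := N%:R :: [seq t <- s | asbool (I t)].
have Igens (i : 'I_(size gens)) : I (nth 0 gens i).
  have := mem_nth 0 (ltn_ord i); rewrite inE => /orP [/eqP -> //|].
  by rewrite mem_filter => /andP [/asboolP].
exists (size gens), (fun i => nth 0 gens i); split=> // x Ix.
have idg := rspan_ideal (fun i => ideal_sub idI (Igens i)).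
have [t st xt] := Ns x (ideal_sub idI Ix); have It := ideal_dvdR_congr idI IN xt Ix.
have gens_t : t \in gens by rewrite inE mem_filter st andbT; apply/orP; right; apply/asboolP.
have [r Rr xtE] := xt; rewrite -(subrK t x) xtE.
apply: (idealD idg); first exact: (idealMr idg Rr (rspan_gen _ (Ordinal (ltn0Sn _)))).
by rewrite -(nth_index 0 gens_t); exact: (rspan_gen _ (Ordinal (etrans (index_mem _ _) gens_t))).
Qed.

Lemma maximal_ideal_sep (P Q : L -> Prop) :
  is_maximal_ideal R P -> is_maximal_ideal R Q -> P <> Q ->
  exists y, [/\ R y, Q y & ~ P y].
Proof.
move=> maxP maxQ PQ; apply: NNPP => noy.
have QP y : Q y -> P y.
  move=> Qy; apply: NNPP => Py; apply: noy.
  by exists y; split; [exact: (ideal_sub (maximal_ideal maxQ) Qy) | | ].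
case: maxQ => _ [_ /(_ P (maximal_ideal maxP) QP)] [PQ' | RP].
  by apply: PQ; apply: pred_ext.
by apply: (maximal_not1 maxP); apply: RP Rpred1.
Qed.

(* [z t] lies in every [Ps t'] but [Ps t]; a multiple of it is [1] mod [Ps t]. *)
Lemma chinese_remainder_fin (T : finType) (Ps : T -> L -> Prop) (X : L -> Prop)
    (v : T -> L) :
  (forall t, is_maximal_ideal R (Ps t)) -> injective Ps -> is_ideal R X ->
  (forall t, X (v t)) -> exists2 f, X f & forall t, prod_ideal (Ps t) X (f - v t).
Proof.
move=> maxPs Ps_inj idX Xv.
have /choice [Y Ysep] : forall t, exists Y : T -> L,
    forall t', t' != t -> [/\ R (Y t'), Ps t' (Y t') & ~ Ps t (Y t')].
  move=> t; apply: (choice (fun t' y => t' != t -> [/\ R y, Ps t' y & ~ Ps t y])) => t'.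
  have [-> | t't] := eqVneq t' t; first by exists 0.
  have Ptt' : Ps t <> Ps t' by move/esym/Ps_inj/eqP; apply/negP.
  have [y ?] := maximal_ideal_sep (maxPs t) (maxPs t') Ptt'.
  by exists y.
pose z t := \prod_(t' | t' != t) Y t t'.
have zP t : [/\ R (z t), ~ Ps t (z t) & forall t', t' != t -> Ps t' (z t)].
  have [Rz Pz] : R (z t) /\ ~ Ps t (z t).
    by apply: (maximal_prod_notin (maxPs t)) => t' /(Ysep t) [].
  split=> // t' t't; rewrite /z (bigD1 t') //=.
  have [_ Pt' _] := Ysep t t' t't.
  apply: (idealMr (maximal_ideal (maxPs t'))) Pt'.
  by apply: Rpred_prod => t'' /andP [/(Ysep t) []].
have /choice [u uP] : forall t, exists u, R u /\ Ps t (u * z t - 1).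
  by move=> t; have [Rz Pz _] := zP t; have [u] := maximal_inv (maxPs t) Rz Pz; exists u.
exists (\sum_t u t * z t * v t).
  apply: (ideal_sum idX) => t _; apply: (idealMl idX _ (Xv t)).
  by have [Rz _ _] := zP t; apply: RpredM (uP t).1 Rz.
move=> t; have idPX := prod_ideal_ideal (maximal_ideal (maxPs t)) idX.
rewrite (bigD1 t) //=.
set S := \sum_(t' | t' != t) _.
have -> : u t * z t * v t + S - v t = (u t * z t - 1) * v t + S by ring.
apply: (idealD idPX); first exact: prod_ideal_mul (uP t).2 (Xv t).
apply: (ideal_sum idPX) => t' t't; apply: prod_ideal_mul (Xv t').
have [_ _ zPt] := zP t'; apply: (idealMl (maximal_ideal (maxPs t)) (uP t').1).
by apply: zPt; rewrite eq_sym.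
Qed.

(* Maximal ideals containing [N] are determined by the residues mod [N] they
   contain, so there are finitely many of them. *)
Lemma maximal_ideals_over_finite N (S : (L -> Prop) -> Prop) : (0 < N)%N ->
  exists (T : finType) (Ps : T -> L -> Prop),
  [/\ injective Ps, forall t, [/\ is_maximal_ideal R (Ps t), Ps t N%:R & S (Ps t)]
    & forall P, is_maximal_ideal R P -> P N%:R -> S P -> exists t, Ps t = P].
Proof.
move=> N_gt0; have [s Ns] := residue_system_exists N_gt0.
pose G P := [/\ is_maximal_ideal R P, P N%:R & S P].
pose hit (c : {set 'I_(size s)}) := asbool (exists2 P, G P & residue_code s P = c).
have /choice [rep repP] : forall c : {c | hit c}, exists P, G P /\ residue_code s P = val c.
  by case=> c /= /asboolP [P GP Pc]; exists P.
exists {c | hit c}, rep; split.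
- by move=> c c' e; apply: val_inj; rewrite -(repP c).2 -(repP c').2 e.
- by move=> c; case: (repP c).
move=> P maxP PN SP; have hitP : hit (residue_code s P) by apply/asboolP; exists P.
pose c : {c | hit c} := exist (fun c => hit c) _ hitP.
exists c; have [[maxQ QN _] codeQ] := repP c.
by apply: (maximal_eq_of_code Ns maxQ maxP QN PN); rewrite codeQ.
Qed.

Lemma chinese_remainder N (S : (L -> Prop) -> Prop) (X : L -> Prop)
    (v : (L -> Prop) -> L) :
  (0 < N)%N -> is_ideal R X -> (forall P, S P -> X (v P)) ->
  exists2 f, X f &
    forall P, is_maximal_ideal R P -> P N%:R -> S P -> prod_ideal P X (f - v P).
Proof.
move=> N_gt0 idX Xv.
have [T [Ps [Ps_inj GPs allPs]]] := maximal_ideals_over_finite S N_gt0.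
have maxPs t : is_maximal_ideal R (Ps t) by case: (GPs t).
have XvPs t : X (v (Ps t)) by case: (GPs t) => _ _ /Xv.
have [f Xf fv] := chinese_remainder_fin maxPs Ps_inj idX XvPs.
by exists f => // P maxP PN SP; have [t <-] := allPs P maxP PN SP; apply: fv.
Qed.

Section Localization.
Variable P : L -> Prop.
Hypothesis maxP : is_maximal_ideal R P.

(* Also used with [X := R]: [localization R P] is by definition [loc_ideal R P R]. *)
Lemma loc_common_denom (X : L -> Prop) k (a : 'I_k -> L) : is_ideal R X ->
  (forall j, loc_ideal R P X (a j)) ->
  exists s (r : 'I_k -> L), [/\ R s, ~ P s, forall j, X (r j) & forall j, a j = r j / s].
Proof.
move=> idX aP.
have /choice [q qP] : forall j, exists q : L * L, [/\ X q.1, R q.2, ~ P q.2 & a j = q.1 / q.2].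
  by move=> j; have [i [s [Xi [Rs [Ps aj]]]]] := aP j; exists (i, s).
have Rq j : R (q j).2 /\ ~ P (q j).2 by case: (qP j).
have [Rs Ps] : R (\prod_j (q j).2) /\ ~ P (\prod_j (q j).2).
  by apply: maximal_prod_notin => // j _; apply: Rq.
exists (\prod_j (q j).2), (fun j => (q j).1 * \prod_(l | l != j) (q l).2); split=> // j.
  have [Xqj _ _ _] := qP j; apply: (idealMr idX) Xqj.
  by apply: Rpred_prod => l _; case: (Rq l).
have [_ _ Pqj ->] := qP j; rewrite [X in _ = _ / X](bigD1 j) //=.
have qj_neq0 := maximal_neq0 maxP Pqj.
have Pi_neq0 : \prod_(l | l != j) (q l).2 != 0.
  by apply/prodf_neq0 => l _; exact: (maximal_neq0 maxP (Rq l).2).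
by field; rewrite qj_neq0 Pi_neq0.
Qed.

Lemma generated_by_loc (I : L -> Prop) d : is_ideal R I -> generated_by R I d ->
  generated_by (localization R P) (loc_ideal R P I) d.
Proof.
move=> idI [g [Ig gen]]; exists g; split=> [j | x].
  exists (g j), 1; do 3?split=> //; [exact: Rpred1 | exact: maximal_not1 | by rewrite divr1].
split=> [[i [s [Ii [Rs [Ps ->]]]]] | [a [aP ->]]].
  have [a [Ra ->]] := (gen i).1 Ii.
  exists (fun j => a j / s); split=> [j|]; first by exists (a j), s.
  by rewrite mulr_suml; apply: eq_bigr => j _; rewrite mulrAC.
have [s [r [Rs Ps Rr ar]]] := loc_common_denom ideal_R aP.
exists (\sum_j r j * g j), s; split; first by apply: (gen _).2; exists r.
do 2?split=> //; rewrite mulr_suml; apply: eq_bigr => j _.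
by rewrite ar mulrAC.
Qed.

Lemma loc_generated_generates_mod (I : L -> Prop) d : is_ideal R I ->
  generated_by (localization R P) (loc_ideal R P I) d ->
  exists h : 'I_d -> L, (forall j, I (h j)) /\ generates_mod P I h.
Proof.
move=> idI [g [gloc gen]].
have [s [h [Rs Ps Ih gh]]] := loc_common_denom idI gloc.
exists h; split=> // x Ix.
have [|a [aloc xa]] := (gen x).1.
  exists x, 1; do 3?split=> //; [exact: Rpred1 | exact: maximal_not1 | by rewrite divr1].
have [t [r [Rt Pt Rr ar]]] := loc_common_denom ideal_R aloc.
have Pts : ~ P (t * s) by apply: maximal_mul_notin.
have [u Ru Puts] := maximal_inv maxP (RpredM Rt Rs) Pts.
have rhE : \sum_j r j * h j = t * s * x.
  rewrite xa mulr_sumr; apply: eq_bigr => j _; rewrite ar gh.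
  by field; rewrite (maximal_neq0 maxP Pt) (maximal_neq0 maxP Ps).
exists (u * \sum_j r j * h j), (- ((u * (t * s) - 1) * x)); split.
  apply: (idealMl (rspan_ideal (fun j => ideal_sub idI (Ih j)))) Ru _.
  by exists r.
have idPI := prod_ideal_ideal (maximal_ideal maxP) idI.
split; first by apply: (idealN idPI); apply: prod_ideal_mul.
by rewrite rhE; ring.
Qed.

End Localization.

Lemma ideal_zero : is_ideal R (fun x => x = 0).
Proof.
split; first by move=> x ->; apply: Rpred0.
split=> //; split=> [x y -> -> | r x _ ->]; [exact: addr0 | exact: mulr0].
Qed.

Lemma exists_nat_in_ideal (I : L -> Prop) a : is_ideal R I -> I a -> a != 0 ->
  exists2 N, (0 < N)%N & I N%:R.
Proof.
move=> idI Ia a_neq0; have [N N_gt0 [r Rr Nar]] := exists_nat_multiple (ideal_sub idI Ia) a_neq0.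
by exists N; rewrite // Nar; apply: idealMr.
Qed.

(* Nakayama: if [I = P I] then some [t] outside [P] kills [I], hence kills [N]. *)
Lemma exists_not_in_prod_ideal (P I : L -> Prop) N :
  is_maximal_ideal R P -> is_ideal R I -> (0 < N)%N -> I N%:R ->
  exists y, I y /\ ~ prod_ideal P I y.
Proof.
move=> maxP idI N_gt0 IN; apply: NNPP => noy.
have [k [f [If Ispan]]] := ideal_fg idI N_gt0 IN.
have [|t [_ Pt tI]] := nakayama maxP idI ideal_zero If Ispan.
  move=> x Ix; exists 0, x; rewrite add0r; do 2?split=> //.
  by apply: NNPP => PIx; apply: noy; exists x.
apply: Pt; move/eqP: (tI _ IN); rewrite mulf_eq0 (negbTE (natf_neq0 N_gt0)) orbF => /eqP ->.
exact: ideal0 (maximal_ideal maxP).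
Qed.

(* The conductor of [x] into [rspan g] lies in no maximal ideal, by Nakayama. *)
Lemma local_global_span (I : L -> Prop) k (g : 'I_k -> L) N :
  is_ideal R I -> (forall j, I (g j)) -> (0 < N)%N -> rspan g N%:R ->
  (forall P, is_maximal_ideal R P -> generates_mod P I g) ->
  forall x, I x -> rspan g x.
Proof.
move=> idI Ig N_gt0 gN genP x Ix.
have idg := rspan_ideal (fun j => ideal_sub idI (Ig j)).
pose C y := R y /\ rspan g (y * x).
have idC : is_ideal R C.
  rewrite /C; split; [|split; [|split]].
  - by move=> y [].
  - by split; [exact: Rpred0 | rewrite mul0r; exact: ideal0 idg].
  - by move=> y z [Ry gy] [Rz gz]; split; [apply: RpredD | rewrite mulrDl; apply: idealD].
  - by move=> r y Rr [Ry gy]; split; [apply: RpredM | rewrite -mulrA; apply: idealMl].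
have [[_] | C1] := classic (C 1); first by rewrite mul1r.
have CN : C N%:R.
  by split; [exact: Rpred_nat | rewrite mulrC; apply: (idealMl idg (ideal_sub idI Ix))].
have [P maxP CP] := exists_maximal_ideal idC N_gt0 CN C1.
have [k' [f [If Ispan]]] := ideal_fg idI N_gt0 (rspan_min idI Ig gN).
have [t [Rt Pt tI]] := nakayama maxP idI idg If Ispan (genP P maxP).
by case: Pt; apply: CP; split=> //; apply: tI.
Qed.

Lemma avoiding_multiple c a N : R c -> R a -> (0 < N)%N ->
  exists2 f, R f & forall Q, is_maximal_ideal R Q -> Q N%:R -> ~ Q a -> ~ Q (c + a * f).
Proof.
move=> Rc Ra N_gt0.
have /choice [w wP] : forall Q, exists w,
    is_maximal_ideal R Q /\ ~ Q a -> R w /\ Q (c + a * w - 1).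
  move=> Q; have [[maxQ Qa] | nQ] := classic (is_maximal_ideal R Q /\ ~ Q a); last first.
    by exists 0 => /nQ.
  have [u Ru Qua] := maximal_inv maxQ Ra Qa.
  exists (u * (1 - c)) => _; split; first by apply: RpredM Ru (RpredB Rpred1 Rc).
  have -> : c + a * (u * (1 - c)) - 1 = (u * a - 1) * (1 - c) by ring.
  by apply: (idealMr (maximal_ideal maxQ)) Qua; apply: RpredB Rpred1 Rc.
have [f Rf fw] := chinese_remainder (S := fun Q => is_maximal_ideal R Q /\ ~ Q a) (v := w)
  N_gt0 ideal_R (fun Q SQ => (wP Q SQ).1).
exists f => // Q maxQ QN Qa Qcaf; have idQ := maximal_ideal maxQ.
have Qfw : Q (f - w Q) by apply: (prod_ideal_subl idQ ideal_R); apply: fw.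
apply: (maximal_not1 maxQ).
have -> : 1 = c + a * f - (c + a * w Q - 1) - a * (f - w Q) by ring.
apply: (idealB idQ); last by apply: (idealMl idQ Ra).
by apply: (idealB idQ Qcaf); apply: (wP Q (conj maxQ Qa)).2.
Qed.

Section LocalGlobal.
Variables (I : L -> Prop) (d : nat).
Hypotheses (idI : is_ideal R I) (d_gt1 : (1 < d)%N).
Hypothesis locgen : forall P, is_maximal_ideal R P ->
  exists h : 'I_d -> L, (forall j, I (h j)) /\ generates_mod P I h.

Let i0 : 'I_d := Ordinal (ltnW d_gt1).
Let i1 : 'I_d := Ordinal d_gt1.

Section NatInIdeal.
Variable N : nat.
Hypotheses (N_gt0 : (0 < N)%N) (IN : I N%:R).

Lemma first_generator : exists g1, [/\ I g1, g1 != 0 &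
  forall P, is_maximal_ideal R P -> P N%:R -> ~ prod_ideal P I g1].
Proof.
have /choice [y yP] : forall P, exists y,
    is_maximal_ideal R P /\ P N%:R -> I y /\ ~ prod_ideal P I y.
  move=> P; have [[maxP _] | nP] := classic (is_maximal_ideal R P /\ P N%:R).
    by have [y ?] := exists_not_in_prod_ideal maxP idI N_gt0 IN; exists y.
  by exists 0 => /nP.
have [g Ig gy] := chinese_remainder (v := y) N_gt0 idI (fun P SP => (yP P SP).1).
pose NN := (N%:R : L) * N%:R.
pose g1 := if g == 0 then NN else g.
exists g1; split.
- by rewrite /g1; case: eqP => _ //; apply: (idealMl idI (Rpred_nat N) IN).
- by rewrite /g1; have [_ | //] := eqVneq g 0; rewrite /NN mulf_neq0 ?natf_neq0.
move=> P maxP PN PIg1; have idPI := prod_ideal_ideal (maximal_ideal maxP) idI.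
have [_ PIy] := yP P (conj maxP PN); apply: PIy.
have PIg1g : prod_ideal P I (g1 - g).
  rewrite /g1; case: eqP => [-> | _]; last by rewrite subrr; apply: ideal0 idPI.
  by rewrite subr0; apply: prod_ideal_mul.
have -> : y P = g1 - (g1 - g) - (g - y P) by ring.
by apply: (idealB idPI); [apply: (idealB idPI) | apply: gy].
Qed.

Lemma generates_mod_over_N g1 : I g1 ->
  (forall P, is_maximal_ideal R P -> P N%:R -> ~ prod_ideal P I g1) ->
  exists c : 'I_d -> L, [/\ c i0 = g1, forall j, I (c j) &
    forall P, is_maximal_ideal R P -> P N%:R -> generates_mod P I c].
Proof.
move=> Ig1 g1P.
have /choice [H HP] : forall P, exists h : 'I_d -> L, is_maximal_ideal R P /\ P N%:R ->
    [/\ h i0 = g1, forall j, I (h j) & generates_mod P I h].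
  move=> P; have [[maxP PN] | nP] := classic (is_maximal_ideal R P /\ P N%:R); last first.
    by exists (fun _ => 0) => /nP.
  have [h [Ih genh]] := locgen maxP.
  have [h' ?] := generates_mod_exchange (maximal_ideal maxP) idI maxP i0 Ih genh Ig1
    (g1P P maxP PN).
  by exists h'.
have IH P j : is_maximal_ideal R P /\ P N%:R -> I (H P j) by move/HP => [].
have /choice [c cP] : forall j, exists c, I c /\
    forall P, is_maximal_ideal R P -> P N%:R -> prod_ideal P I (c - H P j).
  move=> j; have [c Ic cH] := chinese_remainder (v := H^~ j) N_gt0 idI (IH^~ j).
  by exists c; split=> // P maxP PN; apply: cH.
pose c' j := if j == i0 then g1 else c j.
exists c'; split=> [||P maxP PN]; first by rewrite /c' eqxx.
  by move=> j; rewrite /c'; case: eqP => _ //; case: (cP j).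
have [H0 _ genH] := HP P (conj maxP PN).
apply: (generates_mod_congr (maximal_ideal maxP) idI _ _ genH) => j; rewrite /c'.
  by case: eqP => _ //; case: (cP j).
case: eqP => [-> | _]; last exact: (cP j).2.
by rewrite H0 subrr; apply: ideal0 (prod_ideal_ideal (maximal_ideal maxP) idI).
Qed.

(* Where [P] contains [N], [g] agrees with [c] modulo [P I]; elsewhere either
   [N'], a multiple of [g i0], or the adjusted [g i1] is a unit modulo [P]. *)
Lemma generates_mod_everywhere : exists g : 'I_d -> L, [/\ forall j, I (g j),
  exists2 N', (0 < N')%N & rspan g N'%:R &
  forall P, is_maximal_ideal R P -> generates_mod P I g].
Proof.
have [g1 [Ig1 g1_neq0 g1P]] := first_generator.
have [c [c0 Ic cgen]] := generates_mod_over_N Ig1 g1P.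
have [N' N'_gt0 [r Rr N'E]] := exists_nat_multiple (ideal_sub idI Ig1) g1_neq0.
have RN := Rpred_nat N; pose NN := (N%:R : L) * N%:R.
have [f Rf fP] := avoiding_multiple (ideal_sub idI (Ic i1)) (RpredM RN RN) N'_gt0.
pose g j := if j == i1 then c i1 + NN * f else c j.
have NNfE : NN * f = N%:R * (N%:R * f) by rewrite /NN mulrA.
have Ig j : I (g j).
  rewrite /g; case: eqP => _ //; apply: (idealD idI (Ic i1)).
  by rewrite NNfE; apply: (idealMl idI RN); apply: (idealMr idI Rf IN).
have gN' : rspan g N'%:R.
  rewrite N'E (_ : g1 = g i0); last by rewrite /g (_ : i0 == i1 = false).
  exact: (idealMr (rspan_ideal (fun j => ideal_sub idI (Ig j))) Rr (rspan_gen g i0)).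
exists g; split=> //; first by exists N'.
move=> P maxP; have idP := maximal_ideal maxP.
have [PN | PN] := classic (P N%:R).
  apply: (generates_mod_congr idP idI Ig _ (cgen P maxP PN)) => j.
  rewrite /g; case: eqP => [-> | _].
    by rewrite addrC addKr NNfE; apply: prod_ideal_mul PN (idealMr idI Rf IN).
  by rewrite subrr; apply: ideal0 (prod_ideal_ideal idP idI).
have [PN' | PN'] := classic (P N'%:R); last exact: (generates_mod_unit idP idI maxP Ig gN' PN').
apply: (generates_mod_unit idP idI maxP Ig (rspan_gen g i1)).
by rewrite /g eqxx; apply: fP => //; apply: maximal_mul_notin.
Qed.

End NatInIdeal.

Lemma generated_by_local_global : generated_by R I d.
Proof.
have [[a [Ia a_neq0]] | I0] := classic (exists a, I a /\ a != 0); last first.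
  exists (fun _ => 0); split=> [j | x]; first exact: ideal0 idI.
  have sum0 (a : 'I_d -> L) : \sum_j a j * 0 = 0 by rewrite big1 // => j _; rewrite mulr0.
  split=> [Ix | [a [_ ->]]]; last by rewrite sum0; apply: ideal0 idI.
  exists (fun _ => 0); split=> [j|]; first exact: Rpred0.
  by rewrite sum0; apply: NNPP => /eqP x_neq0; apply: I0; exists x.
have [N N_gt0 IN] := exists_nat_in_ideal idI Ia a_neq0.
have [g [Ig [N' N'_gt0 gN'] gen]] := generates_mod_everywhere N_gt0 IN.
exists g; split=> // x; split; first exact: (local_global_span idI Ig N'_gt0 gN' gen).
exact: (rspan_min idI Ig).
Qed.

End LocalGlobal.

End NumberRing.

Theorem lemma4p5 (L : fieldExtType rat) (R I : L -> Prop) :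
  is_subring R -> is_ideal R I ->
  forall d : nat, (2 <= d)%N ->
    (generated_by R I d <->
     forall P : L -> Prop, is_maximal_ideal R P ->
       generated_by (localization R P) (loc_ideal R P I) d).
Proof.
move=> subR idI d d_gt1; split=> [Igen P maxP | locgen].
  exact: (generated_by_loc subR maxP idI Igen).
apply: (generated_by_local_global subR idI d_gt1) => P maxP.
exact: (loc_generated_generates_mod subR maxP idI (locgen P maxP)).
Qed.
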